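(* Let $\mathcal{D}=(\mathcal{P},\mathcal{B},\mathcal{I})$ be a $(v,b,r,k,\lambda_1,0)$ SPBIBD of type $(k-1,t)$ with $0<t<k$, and let $\Gamma$ be its incidence graph. Then every vertex $p\in\mathcal{P}$ has eccentricity $4$ in $\Gamma$.
   Context: A design $\mathcal{D}=(\mathcal{P},\mathcal{B},\mathcal{I})$ is an incidence structure with $|\mathcal{P}|=v$, $|\mathcal{B}|=b$, every block incident with exactly $k$ points and every point with exactly $r$ blocks; standing assumptions: $v>k$ and $r<b$. $(p,B)$ is a flag if $p\in B$, a non-flag otherwise. $\mathcal{D}$ is a $(v,b,r,k,\lambda_1,\lambda_2)$ SPBIBD of type $(s,t)$ if (i) any two distinct points are together in exactly $\lambda_1$ or exactly $\lambda_2$ blocks; (ii) for every flag $(p,B)$, the number of points of $B$ other than $p$ lying with $p$ in exactly $\lambda_1$ blocks is $s$; (iii) for every non-flag $(p,B)$, the number of points of $B$ lying with $p$ in exactly $\lambda_1$ blocks is $t$. The incidence graph is the bipartite graph on $\mathcal{P}\cup\mathcal{B}$ with $p\sim B$ iff $p\in B$. The eccentricity of a vertex $u$ is $\max_w\partial(u,w)$, where $\partial$ is graph distance. *)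

From mathcomp Require Import all_boot.
Set Implicit Arguments. Unset Strict Implicit. Unset Printing Implicit Defensive.

Section Design.
Variables (P B : finType) (I : P -> B -> bool).

Definition block_pts (X : B) : {set P} := [set p | I p X].
Definition pt_blocks (p : P) : {set B} := [set X | I p X].

Definition lam (p q : P) : nat := #|[set X | I p X && I q X]|.

Definition is_design (v b r k : nat) : Prop :=
  [/\ #|P| = v /\ #|B| = b,
      (forall X : B, #|block_pts X| = k),
      (forall p : P, #|pt_blocks p| = r),
      (k < v) & (r < b)].

Definition is_SPBIBD (v b r k l1 l2 s t : nat) : Prop :=
  [/\ is_design v b r k,
      (forall p q : P, p != q -> lam p q = l1 \/ lam p q = l2),
      (forall (p : P) (X : B), I p X ->
          #|[set q | [&& q != p, I q X & lam p q == l1]]| = s)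
    & (forall (p : P) (X : B), ~~ I p X ->
          #|[set q | I q X && (lam p q == l1)]| = t)].

Definition inc_adj : rel (P + B)%type := fun x y =>
  match x, y with
  | inl p, inr X => I p X
  | inr X, inl p => I p X
  | _, _ => false
  end.

End Design.

Section Graph.
Variables (T : finType) (e : rel T).

Definition gdist_is (u w : T) (n : nat) : Prop :=
  (exists s : seq T, [/\ path e u s, last u s = w & size s = n]) /\
  (forall s : seq T, path e u s -> last u s = w -> n <= size s).

(** eccentricity of u equals n: every vertex is at finite distance <= n,
    and some vertex is at distance exactly n (so n is the max distance;
    if some vertex is unreachable the eccentricity is infinite and this fails) *)
Definition eccentricity_is (u : T) (n : nat) : Prop :=
  (forall w : T, exists2 d, gdist_is u w d & d <= n) /\
  (exists w : T, gdist_is u w n).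
End Graph.

From mathcomp Require Import all_boot.
Set Implicit Arguments. Unset Strict Implicit. Unset Printing Implicit Defensive.

(* With lambda_2 = 0, two distinct points are collinear (lie on a common
   block) exactly when they are lambda_1-associates, and lambda_1 > 0 since
   type (k-1, t) with k >= 2 makes every other point of a block through p an
   associate of p.  In the bipartite incidence graph, p, its blocks and its
   collinear points are at distance 0, 1 and 2.  Every other block contains
   t > 0 associates of p, so it is at distance 3, and every remaining point,
   lying on such a block, is at distance 4.  As r < b some block misses p,
   and as t < k that block contains a non-associate of p, which is at
   distance exactly 4. *)

Section GraphDistance.
Variables (T : finType) (e : rel T).

Lemma gdist_is_shortest (u w : T) (n : nat) :
  (exists s, [/\ path e u s, last u s = w & size s = n]) ->
  (forall s, path e u s -> last u s = w -> size s < n -> False) ->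
  gdist_is e u w n.
Proof.
move=> walk no_shorter; split=> // s es ls.
by rewrite leqNgt; apply/negP; apply: no_shorter.
Qed.

End GraphDistance.

Section IncidenceGraph.
Variables (P B : finType) (I : P -> B -> bool).

Definition collinear (p q : P) : bool := [exists X, I p X && I q X].

Lemma collinearP (p q : P) : reflect (exists2 X, I p X & I q X) (collinear p q).
Proof.
apply: (iffP existsP) => [[X /andP[pX qX]]|[X pX qX]]; exists X => //.
by rewrite pX qX.
Qed.

Lemma lam_gt0 (p q : P) : (0 < lam I p q) = collinear p q.
Proof.
apply/card_gt0P/collinearP => [[X]|[X pX qX]]; first by rewrite inE => /andP[]; exists X.
by exists X; rewrite inE pX qX.
Qed.

Lemma inc_walk_lt4 (p : P) (s : seq (P + B)) :
  path (inc_adj I) (inl p) s -> size s < 4 ->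
  [\/ s = [::], exists X, s = [:: inr X],
      exists X q, s = [:: inr X; inl q]
    | exists X q Y, s = [:: inr X; inl q; inr Y]].
Proof.
case: s => [|[?|X] [|[q|?] [|[?|Y] [|? ?]]]] //=; rewrite ?andbF // => _ _.
- exact: Or41.
- by apply: Or42; exists X.
- by apply: Or43; exists X, q.
- by apply: Or44; exists X, q, Y.
Qed.

Variable p : P.

Lemma gdist_inc_self : gdist_is (inc_adj I) (inl p) (inl p) 0.
Proof. by apply: gdist_is_shortest => //; exists [::]. Qed.

Lemma gdist_inc_flag (X : B) : I p X -> gdist_is (inc_adj I) (inl p) (inr X) 1.
Proof.
move=> pX; apply: gdist_is_shortest => [|[]] //.
by exists [:: inr X]; rewrite /= pX.
Qed.

Lemma gdist_inc_collinear (q : P) :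
  q != p -> collinear p q -> gdist_is (inc_adj I) (inl p) (inl q) 2.
Proof.
move=> qp /collinearP[X pX qX]; apply: gdist_is_shortest.
  by exists [:: inr X; inl q]; rewrite /= pX qX.
move=> s ps ls lt_n; have := inc_walk_lt4 ps (leq_trans lt_n (isT : 2 <= 4)).
case=> [|[?]|[? [?]]|[? [? [?]]]] s_eq; rewrite s_eq //= in ls lt_n.
by case: ls qp => ->; rewrite eqxx.
Qed.

Lemma gdist_inc_nonflag (X : B) (q : P) :
  ~~ I p X -> I q X -> collinear p q -> gdist_is (inc_adj I) (inl p) (inr X) 3.
Proof.
move=> npX qX /collinearP[Y pY qY]; apply: gdist_is_shortest.
  by exists [:: inr Y; inl q; inr X]; rewrite /= pY qY qX.
move=> s ps ls lt_n; have := inc_walk_lt4 ps (leq_trans lt_n (isT : 3 <= 4)).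
case=> [|[?]|[? [?]]|[? [? [?]]]] s_eq; rewrite s_eq //= in ps ls lt_n.
by case: ls ps => ->; rewrite andbT (negbTE npX).
Qed.

Lemma gdist_inc_noncollinear (q q' : P) (X : B) :
  q != p -> ~~ collinear p q -> I q X -> I q' X -> collinear p q' ->
  gdist_is (inc_adj I) (inl p) (inl q) 4.
Proof.
move=> qp ncol qX q'X /collinearP[Y pY q'Y]; apply: gdist_is_shortest.
  by exists [:: inr Y; inl q'; inr X; inl q]; rewrite /= pY q'Y q'X qX.
move=> s ps ls /(inc_walk_lt4 ps).
case=> [|[?]|[X' [?]]|[? [? [?]]]] s_eq; rewrite s_eq //= in ps ls.
- by case: ls qp => ->; rewrite eqxx.
- case: ls ps => ->; rewrite andbT => /andP[pX' qX'].
  by case/collinearP: ncol; exists X'.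
Qed.

Lemma inc_point_eccentricity4 :
  (forall q, exists X, I q X) ->
  (forall X, ~~ I p X -> exists2 q, I q X & collinear p q) ->
  (exists2 q, q != p & ~~ collinear p q) ->
  eccentricity_is (inc_adj I) (inl p) 4.
Proof.
move=> on_block meets far.
have dist4 q : q != p -> ~~ collinear p q -> gdist_is (inc_adj I) (inl p) (inl q) 4.
  move=> qp ncol; have [X qX] := on_block q.
  have npX : ~~ I p X by apply: contra ncol => pX; apply/collinearP; exists X.
  have [q' q'X col'] := meets X npX.
  exact: gdist_inc_noncollinear qp ncol qX q'X col'.
split; last by have [q qp ncol] := far; exists (inl q); apply: dist4.
case=> [q|X].
  have [->|qp] := eqVneq q p; first by exists 0; [apply: gdist_inc_self|].
  have [col|ncol] := boolP (collinear p q); first by exists 2; [apply: gdist_inc_collinear|].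
  by exists 4; [apply: dist4|].
have [pX|npX] := boolP (I p X); first by exists 1; [apply: gdist_inc_flag|].
have [q qX col] := meets X npX.
by exists 3; [apply: gdist_inc_nonflag npX qX col|].
Qed.

End IncidenceGraph.

Section SPBIBDAssociates.
Variables (P B : finType) (I : P -> B -> bool) (v b r k l1 t : nat) (p : P).
Hypotheses (hD : is_SPBIBD I v b r k l1 0 k.-1 t) (ht : 0 < t < k).

Lemma spbibd_on_block (q : P) : exists X, I q X.
Proof.
case: hD => [[[_ cardB] cardX cardq _ r_lt_b] _ _ _].
have /card_gt0P[X0 _] : 0 < #|B| by rewrite cardB (leq_ltn_trans _ r_lt_b).
have /card_gt0P[q0] : 0 < #|block_pts I X0|.
  by rewrite cardX; case/andP: ht; apply: ltn_trans.
rewrite inE => q0X0.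
have /card_gt0P[X] : 0 < #|pt_blocks I q|.
  by rewrite cardq -(cardq q0); apply/card_gt0P; exists X0; rewrite inE.
by rewrite inE; exists X.
Qed.

Lemma spbibd_l1_gt0 : 0 < l1.
Proof.
case: hD => [_ _ flag _]; have [X pX] := spbibd_on_block p.
have /card_gt0P[q] : 0 < #|[set q | [&& q != p, I q X & lam I p q == l1]]|.
  by rewrite flag // ltn_predRL; case/andP: ht; apply: leq_ltn_trans.
rewrite inE => /and3P[_ qX /eqP <-].
by rewrite lam_gt0; apply/collinearP; exists X.
Qed.

Lemma spbibd_collinearE (q : P) : q != p -> collinear I p q = (lam I p q == l1).
Proof.
case: hD => [_ lam_l1_or_0 _ _] qp; rewrite -lam_gt0.
have pq : p != q by rewrite eq_sym.
have [->|->] := lam_l1_or_0 p q pq; first by rewrite eqxx spbibd_l1_gt0.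
by rewrite eq_sym eqn0Ngt spbibd_l1_gt0.
Qed.

Lemma spbibd_nonflag_collinear (X : B) :
  ~~ I p X -> exists2 q, I q X & collinear I p q.
Proof.
case: hD => [_ _ _ nonflag] npX.
have /card_gt0P[q] : 0 < #|[set q | I q X && (lam I p q == l1)]|.
  by rewrite nonflag //; case/andP: ht.
rewrite inE => /andP[qX /eqP lam_l1]; exists q => //.
by rewrite -lam_gt0 lam_l1 spbibd_l1_gt0.
Qed.

Lemma spbibd_exists_noncollinear : exists2 q, q != p & ~~ collinear I p q.
Proof.
case: hD => [[[_ cardB] cardX cardp _ r_lt_b] _ _ nonflag].
have [X _] : exists2 X, X \in [set: B] & X \notin pt_blocks I p.
  apply/subsetPn; apply: contraL r_lt_b => /subset_leq_card.
  by rewrite cardsT cardB cardp leqNgt.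
rewrite inE => npX.
have [q] : exists2 q, q \in block_pts I X & q \notin [set q | I q X && (lam I p q == l1)].
  apply/subsetPn; case/andP: ht => _; apply: contraL => /subset_leq_card.
  by rewrite cardX nonflag // leqNgt.
rewrite !inE => qX; rewrite qX /= => lam_neq_l1.
have qp : q != p by apply: contraNneq npX => <-.
by exists q; rewrite // spbibd_collinearE.
Qed.

End SPBIBDAssociates.

Theorem lemma4p1 (P B : finType) (I : P -> B -> bool)
    (v b r k l1 t : nat) :
  is_SPBIBD I v b r k l1 0 k.-1 t ->
  0 < t < k ->
  forall p : P, eccentricity_is (inc_adj I) (inl p) 4.
Proof.
move=> hD ht p; apply: inc_point_eccentricity4.
- exact: spbibd_on_block hD ht.
- exact: spbibd_nonflag_collinear hD ht.
- exact: spbibd_exists_noncollinear hD ht.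
Qed.
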